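(* Let $p$ be an odd prime, $q\in\mathbb{C}_p$ with $|q-1|_p<1$, $\alpha\in\mathbb{N}\cup\{0\}$, $h\in\mathbb{N}$. For every integer $n\ge0$, \[ \int_{\mathbb{Z}_p}q^{(h-1)(\xi+1)}[1-\xi]_{q^{-\alpha}}^n\,d\mu_{-q}(\xi)=\frac{\widetilde{G}_{n+1,q^{-1}}^{(\alpha,h)}(2)}{n+1}. \]
   Context: For $x\in\mathbb{Z}_p$ write $[x]_q=\frac{1-q^x}{1-q}$. For a uniformly differentiable $f:\mathbb{Z}_p\to\mathbb{C}_p$, the fermionic $p$-adic $q$-integral is $\int_{\mathbb{Z}_p}f(\xi)\,d\mu_{-q}(\xi)=\lim_{N\to\infty}\frac{1}{[p^N]_{-q}}\sum_{\xi=0}^{p^N-1}f(\xi)(-q)^{\xi}$, with $[p^N]_{-q}=\frac{1+q^{p^N}}{1+q}$. The $(h,q)$-Genocchi polynomials with weight $\alpha$ are defined for $n\ge0$, $x\in\mathbb{Z}_p$ by $\frac{\widetilde{G}_{n+1,q}^{(\alpha,h)}(x)}{n+1}=\int_{\mathbb{Z}_p}q^{(h-1)\xi}[x+\xi]_{q^{\alpha}}^n\,d\mu_{-q}(\xi)$. The version with $q^{-1}$ is obtained by replacing $q$ by $q^{-1}$ everywhere: $\frac{\widetilde{G}_{n+1,q^{-1}}^{(\alpha,h)}(x)}{n+1}=\int_{\mathbb{Z}_p}q^{(1-h)\xi}[x+\xi]_{q^{-\alpha}}^n\,d\mu_{-q^{-1}}(\xi)$. *)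

(* C_p is modelled abstractly. *)
From HB Require Import structures.
From mathcomp Require Import all_boot all_order all_algebra.
From mathcomp Require Import reals.
Set Implicit Arguments. Unset Strict Implicit. Unset Printing Implicit Defensive.
Import Order.TTheory GRing.Theory Num.Theory.
Local Open Scope ring_scope.

Section Defs.
Variables (R : realType) (K : fieldType) (abs : K -> R).

Definition padic_abs (p : nat) : Prop :=
  [/\ forall x, abs x = 0 <-> x = 0,
      forall x y, abs (x * y) = abs x * abs y,
      forall x y, abs (x + y) <= Num.max (abs x) (abs y)
    & forall n : nat, (0 < n)%N -> abs n%:R = (p%:R ^- (logn p n) : R)].

Definition converges_to (u : nat -> K) (L : K) : Prop :=
  forall e : R, 0 < e -> exists N : nat, forall m, (N <= m)%N -> abs (u m - L) < e.

Definition cauchy (u : nat -> K) : Prop :=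
  forall e : R, 0 < e -> exists N : nat,
    forall m k, (N <= m)%N -> (N <= k)%N -> abs (u m - u k) < e.

Definition complete_abs : Prop :=
  forall u : nat -> K, cauchy u -> exists L, converges_to u L.

(* [x]_q = (1 - q^x)/(1 - q), with the standard convention [x]_1 = x *)
Definition qnum (q : K) (x : int) : K :=
  if q == 1 then x%:~R else (1 - q ^ x) / (1 - q).

(* Riemann sums of the fermionic p-adic q-integral *)
Definition ferm_sum (p : nat) (q : K) (f : int -> K) (N : nat) : K :=
  (qnum (- q) (p ^ N)%N)^-1 * \sum_(0 <= xi < p ^ N) f xi%:Z * (- q) ^+ xi.

Definition fermionic_integral_is (p : nat) (q : K) (f : int -> K) (L : K) : Prop :=
  converges_to (ferm_sum p q f) L.

(* G = \widetilde{G}^{(alpha,h)}_{n+1,q}(x), i.e.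
   G/(n+1) = \int_{Z_p} q^{(h-1)xi} [x+xi]_{q^alpha}^n d\mu_{-q}(xi) *)
Definition qGenocchi_is (p : nat) (q : K) (alpha h n : nat) (x : int) (G : K) : Prop :=
  fermionic_integral_is p q
    (fun xi => q ^ ((h%:Z - 1) * xi) * (qnum (q ^+ alpha) (x + xi)) ^+ n)
    (G / (n.+1)%:R).

End Defs.

From HB Require Import structures.
From mathcomp Require Import all_boot all_order all_algebra.
From mathcomp Require Import reals.
From mathcomp Require Import ring lra zify.
Set Implicit Arguments. Unset Strict Implicit. Unset Printing Implicit Defensive.
Import Order.TTheory GRing.Theory Num.Theory.
Local Open Scope ring_scope.

(* Substituting xi = p^N - 1 - i in the Riemann sums of the left-hand side and
   using [M]_(x^-1) = x^(1-M) [M]_x turns them exactly into the Riemann sums of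
   the q^-1-Genocchi integrand at x = 2, evaluated at i - p^N instead of i.
   Since abs (q - 1) < 1, that integrand moves by at most
   max(1/p, abs (q - 1))^N when its argument moves by a multiple of p^N.  This
   bound makes its Riemann sums a Cauchy sequence, so the q^-1-integral exists
   by completeness, and it shows that both sequences of Riemann sums have the
   same limit. *)

Lemma bernoulli_ineq (R : realDomainType) (t : R) (n : nat) :
  0 <= t -> 1 + n%:R * t <= (1 + t) ^+ n.
Proof.
move=> t0; elim: n => [|n IH]; first by rewrite mul0r addr0 expr0.
rewrite exprS -natr1.
have : 0 <= n%:R * t by rewrite mulr_ge0 ?ler0n.
nra.
Qed.

Lemma exprn_lt_small (R : archiRealFieldType) (r e : R) :
  0 <= r -> r < 1 -> 0 < e -> exists N : nat, r ^+ N < e.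
Proof.
move=> r0 r1 e0.
have [->|rn0] := eqVneq r 0; first by exists 1%N; rewrite expr1.
have rp : 0 < r by rewrite lt_def rn0 r0.
set t := r^-1 - 1.
have tp : 0 < t by rewrite subr_gt0 invf_gt1.
have et : 0 < e * t by rewrite mulr_gt0.
set N := Num.Def.archi_bound ((e * t)^-1); exists N.
have hN : (e * t)^-1 < N%:R by apply: archi_boundP; rewrite invr_ge0 ltW.
have NtV : e^-1 < N%:R * t by rewrite -ltr_pdivrMr // -invfM.
have : e^-1 < (r ^+ N)^-1.
  rewrite -exprVn -[r^-1](subrK 1) addrC -/t.
  apply: lt_le_trans (bernoulli_ineq N (ltW tp)).
  by rewrite ltr_wpDl.
by rewrite ltf_pV2 ?posrE ?exprn_gt0.
Qed.

Lemma sum_nat_mul_split (V : nmodType) (F : nat -> V) k m :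
  \sum_(0 <= i < k * m) F i = \sum_(0 <= j < k) \sum_(0 <= a < m) F (a + j * m)%N.
Proof.
rewrite big_nat_mul; apply: eq_bigr => j _.
by rewrite -{1}[(j * m)%N]add0n big_addn mulSn addnK.
Qed.

Section QNumbers.
Variable K : fieldType.

Lemma qnum_mul (x : K) (m k : nat) :
  qnum x (m * k)%N%:Z = qnum x m%:Z * \sum_(j < k) (x ^+ m) ^+ j.
Proof.
rewrite /qnum; case: eqP => [->|/eqP x1].
  under eq_bigr do rewrite !expr1n.
  by rewrite sumr_const card_ord -!pmulrn natrM.
rewrite mulrAC; congr (_ / _).
by rewrite -!exprnP exprM -opprB subrX1 -mulNr opprB.
Qed.

Lemma qnumV (x : K) (m : nat) : x != 0 -> qnum x^-1 m%:Z = x ^- m.-1 * qnum x m%:Z.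
Proof.
move=> x0; rewrite /qnum invr_eq1; case: eqP => [->|/eqP x1].
  by rewrite expr1n invr1 mul1r.
case: m => [|m]; first by rewrite !expr0 subrr !mul0r mulr0.
rewrite -!exprnP exprVn /= exprS.
have xm0 : x ^+ m != 0 by rewrite expf_neq0.
move: (x ^+ m) xm0 => X X0; field.
by rewrite X0 x0 !subr_eq0 [1 == x]eq_sym x1.
Qed.

Lemma ferm_sum_reflect (p : nat) (q : K) (f : int -> K) N : q != 0 ->
  ferm_sum p q f N = ferm_sum p q^-1 (fun i => f ((p ^ N)%N%:Z - 1 - i)) N.
Proof.
move=> q0; set M := (p ^ N)%N; rewrite /ferm_sum.
have nq0 : - q != 0 by rewrite oppr_eq0.
rewrite -invrN qnumV // invfM invrK big_nat_rev add0n [_ / _]mulrC -mulrA.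
congr (_ * _); rewrite big_distrr /=; apply: eq_big_nat => i /andP [_ iM].
have -> : (M - i.+1)%N%:Z = M%:Z - 1 - i%:Z by lia.
have -> : M.-1 = (M - i.+1 + i)%N by lia.
by rewrite exprVn exprD mulrC mulrA mulrAC mulfK ?expf_neq0.
Qed.

Definition qgenocchi_integrand (q : K) (alpha h n : nat) (x xi : int) : K :=
  q ^ ((h%:Z - 1) * xi) * qnum (q ^+ alpha) (x + xi) ^+ n.

Lemma qgenocchi_integrandV (q : K) (alpha h n : nat) (xi : int) :
  q ^ ((h%:Z - 1) * (xi + 1)) * qnum (q ^- alpha) (1 - xi) ^+ n =
  qgenocchi_integrand q^-1 alpha h n 2 (-1 - xi).
Proof.
rewrite /qgenocchi_integrand exprVn exprz_inv.
by congr (q ^ _ * qnum _ _ ^+ n); ring.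
Qed.

End QNumbers.

Section PadicAbs.
Variables (R : realType) (K : fieldType) (abs : K -> R) (p : nat).
Hypotheses (p_prime : prime p) (habs : padic_abs abs p).

Lemma abs_eq0 x : (abs x == 0) = (x == 0).
Proof. by case: habs => H _ _ _; apply/eqP/eqP => /H. Qed.

Lemma abs0 : abs 0 = 0. Proof. by apply/eqP; rewrite abs_eq0. Qed.

Lemma absM x y : abs (x * y) = abs x * abs y.
Proof. by case: habs. Qed.

Lemma absD_max x y : abs (x + y) <= Num.max (abs x) (abs y).
Proof. by case: habs. Qed.

Lemma abs_nat n : (0 < n)%N -> abs n%:R = p%:R ^- logn p n.
Proof. by case: habs => _ _ _; apply. Qed.

Lemma abs1 : abs 1 = 1.
Proof.
have a1 : abs 1 != 0 by rewrite abs_eq0 oner_eq0.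
by apply: (mulfI a1); rewrite -absM !mulr1.
Qed.

Lemma abs_p : abs p%:R = p%:R^-1.
Proof. by rewrite abs_nat ?prime_gt0 // logn_prime // eqxx expr1. Qed.

Lemma abs_p_lt1 : p%:R^-1 < 1 :> R.
Proof. by rewrite invf_lt1 ?ltr1n ?prime_gt1 ?ltr0n ?prime_gt0. Qed.

(* The p-adic condition rules out abs (-1) = -1: write 1 = p - (p - 1). *)
Lemma absN1 : abs (-1) = 1.
Proof.
have sq : abs (-1) * abs (-1) = 1 by rewrite -absM mulrNN mulr1 abs1.
have p1_gt0 : (0 < p.-1)%N by rewrite -subn1 subn_gt0 prime_gt1.
have ap1 : abs (p.-1)%:R = 1.
  rewrite abs_nat // lognE gtnNdvd ?andbF ?expr0 ?invr1 //.
  by rewrite prednK ?prime_gt0.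
have e1 : (1 : K) = p%:R + - (p.-1)%:R.
  by rewrite -{1}(prednK (prime_gt0 p_prime)) -addn1 natrD addrAC subrr add0r.
have : abs 1 <= Num.max (abs p%:R) (abs (- (p.-1)%:R)).
  by rewrite {1}e1 absD_max.
rewrite abs1 abs_p -mulN1r absM ap1 mulr1 le_max.
have := abs_p_lt1; rewrite leNgt => -> /=.
nra.
Qed.

Lemma absN x : abs (- x) = abs x.
Proof. by rewrite -mulN1r absM absN1 mul1r. Qed.

Lemma abs_ge0 x : 0 <= abs x.
Proof. by have := absD_max x (- x); rewrite subrr abs0 absN maxxx. Qed.

Lemma absB_max x y : abs (x - y) <= Num.max (abs x) (abs y).
Proof. by rewrite -(absN y) absD_max. Qed.

Lemma absBC x y : abs (x - y) = abs (y - x).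
Proof. by rewrite -absN opprB. Qed.

Lemma absV x : abs x^-1 = (abs x)^-1.
Proof.
have [->|x0] := eqVneq x 0; first by rewrite invr0 abs0 invr0.
by apply: (mulfI (_ : abs x != 0)); rewrite ?abs_eq0 // -absM !mulfV ?abs1 ?abs_eq0.
Qed.

Lemma absX x n : abs (x ^+ n) = abs x ^+ n.
Proof. by elim: n => [|n IH]; rewrite ?abs1 // !exprS absM IH. Qed.

Lemma abs_sum_le (I : Type) (r : seq I) (P : pred I) (F : I -> K) (B : R) :
  0 <= B -> (forall i, P i -> abs (F i) <= B) -> abs (\sum_(i <- r | P i) F i) <= B.
Proof.
move=> B0 FB; apply: (big_ind (fun x => abs x <= B)) => //; first by rewrite abs0.
by move=> x y hx hy; apply: le_trans (absD_max x y) _; rewrite ge_max hx hy.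
Qed.

Lemma absD_eq x y : abs y < abs x -> abs (x + y) = abs x.
Proof.
move=> yx; apply/eqP; rewrite eq_le; apply/andP; split.
  by apply: le_trans (absD_max x y) _; rewrite ge_max lexx ltW.
have := absB_max (x + y) y; rewrite addrK le_max => /orP [//|xy].
by have := lt_le_trans yx xy; rewrite ltxx.
Qed.

Lemma natr_neq0 n : (0 < n)%N -> n%:R != 0 :> K.
Proof.
by move=> n0; rewrite -abs_eq0 abs_nat // invr_eq0 expf_neq0 ?pnatr_eq0 -?lt0n ?prime_gt0.
Qed.

Lemma abs_nat_le1 n : abs n%:R <= 1.
Proof.
case: n => [|n]; first by rewrite abs0.
by rewrite abs_nat // -exprVn exprn_ile1 ?invr_ge0 ?ler0n ?ltW ?abs_p_lt1.
Qed.

Lemma abs_int_le1 (z : int) : abs z%:~R <= 1.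
Proof. by case: z => n; rewrite ?NegzE ?mulrNz ?absN abs_nat_le1. Qed.

Lemma abs_expn N : abs (p ^ N)%:R = p%:R ^- N.
Proof. by rewrite abs_nat ?expn_gt0 ?prime_gt0 // pfactorK. Qed.

Lemma converges_to_near (u v : nat -> K) (L : K) (r : R) :
  0 <= r -> r < 1 -> converges_to abs u L ->
  (forall N, abs (v N - u N) <= r ^+ N) -> converges_to abs v L.
Proof.
move=> r0 r1 uL vu e e0.
have [N1 hN1] := uL e e0; have [N2 hN2] := exprn_lt_small r0 r1 e0.
exists (maxn N1 N2) => m; rewrite geq_max => /andP [m1 m2].
rewrite -(subrK (u m) (v m)) -addrA.
apply: le_lt_trans (absD_max _ _) _; rewrite gt_max hN1 // andbT.
apply: le_lt_trans (vu m) (le_lt_trans _ hN2).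
by apply: ler_wiXn2l => //; exact: ltW.
Qed.

Lemma abs2 : odd p -> abs 2 = 1.
Proof.
move=> p_odd; rewrite abs_nat // lognE.
suff -> : (p %| 2)%N = false by rewrite !andbF expr0 invr1.
apply/negbTE; apply: contraL p_odd => /(dvdn_leq (isT : (0 < 2)%N)).
by rewrite leq_eqVlt ltnS leqNgt prime_gt1 // orbF => /eqP ->.
Qed.

Lemma abs_1D_principal Q : odd p -> abs (Q - 1) < 1 -> abs (1 + Q) = 1.
Proof.
move=> p_odd Q1; have -> : 1 + Q = 2 + (Q - 1) by ring.
by rewrite absD_eq abs2.
Qed.

(* The factor by which Q |-> Q ^+ p contracts the distance to 1 once
   abs (Q - 1) <= s. *)
Definition prate (s : R) : R := Num.max p%:R^-1 s.

Lemma prate_ge0 s : 0 <= prate s.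
Proof. by rewrite le_max invr_ge0 ler0n. Qed.

Lemma prate_lt1 s : s < 1 -> prate s < 1.
Proof. by rewrite gt_max abs_p_lt1. Qed.

Lemma prate_le s t : s <= t -> prate s <= prate t.
Proof. by move=> st; rewrite /prate ge_max !le_max lexx st !orbT. Qed.

Lemma absXz_eq1 Q (z : int) : abs Q = 1 -> abs (Q ^ z) = 1.
Proof. by case: z => n Q1; rewrite ?NegzE ?absV absX Q1 expr1n ?invr1. Qed.

Lemma absXn_sub1 Q n : abs Q <= 1 -> abs (Q ^+ n - 1) <= abs (Q - 1).
Proof.
move=> Q1; rewrite subrX1 absM ler_piMr ?abs_ge0 //.
by apply: abs_sum_le => // i _; rewrite absX exprn_ile1 ?abs_ge0.
Qed.

Section PrincipalUnit.
Variable Q : K.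

Lemma abs_principal : abs (Q - 1) < 1 -> abs Q = 1.
Proof. by move=> Q1; rewrite -[Q](subrK 1) addrC absD_eq abs1. Qed.

Lemma principal_neq0 : abs (Q - 1) < 1 -> Q != 0.
Proof. by move=> /abs_principal aQ; rewrite -abs_eq0 aQ oner_eq0. Qed.

Hypothesis Q1 : abs (Q - 1) < 1.

Lemma abs_principalV : abs (Q^-1 - 1) = abs (Q - 1).
Proof.
have -> : Q^-1 - 1 = Q^-1 * (1 - Q) by rewrite mulrBr mulr1 mulVf ?principal_neq0.
by rewrite absM absV (abs_principal Q1) invr1 mul1r -absN opprB.
Qed.

Lemma absXz_sub1 (z : int) : abs (Q ^ z - 1) <= abs (Q - 1).
Proof.
have aQ := abs_principal Q1; case: z => n; first by rewrite absXn_sub1 ?aQ.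
by rewrite NegzE -exprnN -exprVn -abs_principalV absXn_sub1 // absV aQ invr1.
Qed.

Lemma absXp_sub1 : abs (Q ^+ p - 1) <= abs (Q - 1) * prate (abs (Q - 1)).
Proof.
rewrite subrX1 absM ler_wpM2l ?abs_ge0 //.
have -> : \sum_(i < p) Q ^+ i = p%:R + \sum_(i < p) (Q ^+ i - 1).
  by rewrite sumrB sumr_const card_ord addrC subrK.
apply: le_trans (absD_max _ _) _; rewrite ge_max abs_p le_max lexx /=.
apply: abs_sum_le => [|i _]; first exact: prate_ge0.
by rewrite le_max absXn_sub1 ?orbT ?(abs_principal Q1).
Qed.

End PrincipalUnit.

Lemma absXexpn_sub1 Q s N : abs (Q - 1) <= s -> s < 1 ->
  abs (Q ^+ (p ^ N) - 1) <= prate s ^+ N * abs (Q - 1).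
Proof.
move=> Qs s1; have Q1 := le_lt_trans Qs s1.
have aQ := abs_principal Q1.
elim: N => [|N IH]; first by rewrite expn0 expr1 expr0 mul1r.
have QN1 : abs (Q ^+ (p ^ N) - 1) < 1 by apply: le_lt_trans (absXn_sub1 _ _) Q1; rewrite aQ.
rewrite expnSr exprM; apply: le_trans (absXp_sub1 QN1) _.
rewrite exprSr mulrAC ler_pM ?abs_ge0 ?prate_ge0 ?prate_le //.
by rewrite (le_trans _ Qs) // absXn_sub1 ?aQ.
Qed.

Lemma absXzexpn_sub1 Q s N (z : int) : abs (Q - 1) <= s -> s < 1 ->
  abs (Q ^ (z * (p ^ N)%N%:Z) - 1) <= prate s ^+ N * abs (Q - 1).
Proof.
move=> Qs s1; have Q1 := le_lt_trans Qs s1.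
have aQ := abs_principal Q1.
have QN1 : abs (Q ^+ (p ^ N) - 1) < 1.
  by apply: le_lt_trans (absXn_sub1 _ _) Q1; rewrite aQ.
rewrite mulrC -exprz_exp.
exact: le_trans (absXz_sub1 QN1 z) (absXexpn_sub1 N Qs s1).
Qed.

Lemma abs_qnum_le1 Q (x : int) : abs (Q - 1) < 1 -> abs (qnum Q x) <= 1.
Proof.
move=> Q1; rewrite /qnum; case: eqP => [_|/eqP Qn1]; first exact: abs_int_le1.
rewrite absM absV !(absBC 1) ler_pdivrMr ?mul1r ?absXz_sub1 //.
by rewrite lt_def abs_eq0 subr_eq0 Qn1 abs_ge0.
Qed.

Lemma abs_subrM_le x y x' y' : abs y <= 1 -> abs x' <= 1 ->
  abs (x * y - x' * y') <= Num.max (abs (x - x')) (abs (y - y')).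
Proof.
move=> y1 x'1.
have -> : x * y - x' * y' = (x - x') * y + x' * (y - y') by ring.
apply: le_trans (absD_max _ _) _; rewrite !absM.
by apply: le_max2; [rewrite ler_piMr ?abs_ge0 | rewrite ler_piMl ?abs_ge0].
Qed.

Lemma abs_subrX_le x y n : abs x <= 1 -> abs y <= 1 ->
  abs (x ^+ n - y ^+ n) <= abs (x - y).
Proof.
move=> x1 y1; elim: n => [|n IH]; first by rewrite subrr abs0 abs_ge0.
rewrite !exprSr; apply: le_trans (abs_subrM_le _ _ _ _) _ => //.
  by rewrite absX exprn_ile1 ?abs_ge0.
by rewrite ge_max IH lexx.
Qed.

Definition geom_continuous (f : int -> K) (r : R) : Prop :=
  forall N (x z : int), abs (f (x + z * (p ^ N)%N%:Z) - f x) <= r ^+ N.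

Lemma geom_continuousM (f g : int -> K) r :
  (forall x, abs (f x) <= 1) -> (forall x, abs (g x) <= 1) ->
  geom_continuous f r -> geom_continuous g r -> geom_continuous (fun x => f x * g x) r.
Proof.
move=> f1 g1 fr gr N x z; apply: le_trans (abs_subrM_le _ _ _ _) _ => //.
by rewrite ge_max fr gr.
Qed.

Lemma geom_continuousX (f : int -> K) r n :
  (forall x, abs (f x) <= 1) -> geom_continuous f r -> geom_continuous (fun x => f x ^+ n) r.
Proof. by move=> f1 fr N x z; apply: le_trans (abs_subrX_le _ _ _) (fr N x z). Qed.

Lemma geom_continuous_expz Q s (c : int) : abs (Q - 1) <= s -> s < 1 ->
  geom_continuous (fun x => Q ^ (c * x)) (prate s).
Proof.
move=> Qs s1 N x z; have Q1 := le_lt_trans Qs s1.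
rewrite mulrDr mulrA expfzDr ?principal_neq0 // -[X in _ - X]mulr1 -mulrBr.
rewrite absM absXz_eq1 ?(abs_principal Q1) // mul1r.
apply: le_trans (absXzexpn_sub1 _ _ Qs s1) _.
by rewrite ler_piMr ?exprn_ge0 ?prate_ge0 // ltW.
Qed.

Lemma geom_continuous_qnum Q s (c : int) : abs (Q - 1) <= s -> s < 1 ->
  geom_continuous (fun x => qnum Q (c + x)) (prate s).
Proof.
move=> Qs s1 N x z; have Q1 := le_lt_trans Qs s1.
rewrite addrA /qnum; case: eqP => [_|/eqP Qn1].
  rewrite (intrD _ (c + x)) addrC addKr intrM absM.
  apply: le_trans (ler_wpM2r (abs_ge0 _) (abs_int_le1 _)) _.
  rewrite mul1r -pmulrn abs_expn -exprVn lerXn2r ?nnegrE ?invr_ge0 ?ler0n ?prate_ge0 //.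
  by rewrite le_max lexx.
have Q0 := principal_neq0 Q1.
have -> : (1 - Q ^ (c + x + z * (p ^ N)%N%:Z)) / (1 - Q) - (1 - Q ^ (c + x)) / (1 - Q)
    = Q ^ (c + x) * (Q ^ (z * (p ^ N)%N%:Z) - 1) / (Q - 1).
  rewrite expfzDr // -[Q - 1]opprB invrN mulrN -mulNr -mulrBl; congr (_ * _).
  by rewrite mulrBr mulr1 !opprB addrCA addrA [_ + (1 - _)]addrCA addrAC subrr add0r.
rewrite absM absV absM absXz_eq1 ?(abs_principal Q1) // mul1r.
rewrite ler_pdivrMr ?absXzexpn_sub1 //.
by rewrite lt_def abs_eq0 subr_eq0 Qn1 abs_ge0.
Qed.

Lemma geom_continuous_qgenocchi_integrand Q s alpha h n x :
  abs (Q - 1) <= s -> s < 1 ->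
  geom_continuous (qgenocchi_integrand Q alpha h n x) (prate s).
Proof.
move=> Qs s1; have Q1 := le_lt_trans Qs s1; have aQ := abs_principal Q1.
have Qa_s : abs (Q ^+ alpha - 1) <= s by rewrite (le_trans _ Qs) ?absXn_sub1 ?aQ.
apply: geom_continuousM => [z|z||].
- by rewrite absXz_eq1.
- by rewrite absX exprn_ile1 ?abs_ge0 ?abs_qnum_le1 ?(le_lt_trans Qa_s).
- exact: geom_continuous_expz.
apply: geom_continuousX => [z|]; first by rewrite abs_qnum_le1 ?(le_lt_trans Qa_s).
exact: geom_continuous_qnum.
Qed.

Section Fermionic.
Variable q : K.
Hypotheses (p_odd : odd p) (q1 : abs (q - 1) < 1).

Lemma qnum_negq m : qnum (- q) m%:Z = (1 - (- q) ^+ m) / (1 + q).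
Proof.
rewrite /qnum; suff /negbTE-> : - q != 1 by rewrite opprK.
by rewrite -subr_eq0 -opprD oppr_eq0 addrC -abs_eq0 abs_1D_principal // oner_eq0.
Qed.

Lemma abs_qnum_negq_expn N : abs (qnum (- q) (p ^ N)%N%:Z) = 1.
Proof.
have qN1 : abs (q ^+ (p ^ N) - 1) < 1.
  by apply: le_lt_trans (absXn_sub1 _ _) q1; rewrite (abs_principal q1).
rewrite qnum_negq exprNn -signr_odd oddX p_odd orbT expr1 mulN1r opprK.
by rewrite absM absV !abs_1D_principal // invr1 mulr1.
Qed.

Lemma abs_ferm_sum_sub (f g : int -> K) B N : 0 <= B ->
  (forall i, (i < p ^ N)%N -> abs (f i%:Z - g i%:Z) <= B) ->
  abs (ferm_sum p q f N - ferm_sum p q g N) <= B.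
Proof.
move=> B0 fg; rewrite /ferm_sum -mulrBr -sumrB absM absV abs_qnum_negq_expn invr1 mul1r.
rewrite big_nat_cond; apply: abs_sum_le => // i /andP [/andP [_ iM] _].
by rewrite -mulrBl absM absX absN (abs_principal q1) expr1n mulr1 fg.
Qed.

Lemma ferm_sum_cauchy (f : int -> K) r N N' : 0 <= r -> geom_continuous f r ->
  (N <= N')%N -> abs (ferm_sum p q f N' - ferm_sum p q f N) <= r ^+ N.
Proof.
move=> r0 fr NN'.
set M := (p ^ N)%N; set k := (p ^ (N' - N))%N; set w := (- q) ^+ M.
have hk : (p ^ N' = k * M)%N by rewrite /k /M -expnD subnK.
set S := \sum_(0 <= a < M) f a%:Z * (- q) ^+ a.
set T := \sum_(0 <= j < k) w ^+ j.
set D := \sum_(0 <= j < k) \sum_(0 <= a < M) (f (a + j * M)%N%:Z - f a%:Z) * (- q) ^+ a * w ^+ j.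
have sum_split : \sum_(0 <= xi < p ^ N') f xi%:Z * (- q) ^+ xi = T * S + D.
  rewrite hk sum_nat_mul_split /T /D big_distrl /= -big_split /=.
  apply: eq_bigr => j _; rewrite big_distrr /= -big_split /=.
  by apply: eq_bigr => a _; rewrite exprD mulnC exprM -/w; ring.
have qnum_split : qnum (- q) (p ^ N')%N%:Z = qnum (- q) M%:Z * T.
  by rewrite hk mulnC qnum_mul /T big_mkord.
have cN := abs_qnum_negq_expn N; have cN' := abs_qnum_negq_expn N'.
have /andP [_ T0] : (qnum (- q) M%:Z != 0) && (T != 0).
  by rewrite -negb_or -mulf_eq0 -qnum_split -abs_eq0 cN' oner_eq0.
rewrite /ferm_sum sum_split -/M -/S qnum_split invfM mulrDr.
rewrite [_ / T * (T * S)]mulrA divfK // addrAC subrr add0r.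
rewrite absM -invfM -qnum_split absV cN' invr1 mul1r.
apply: abs_sum_le => [|j _]; first exact: exprn_ge0.
apply: abs_sum_le => [|a _]; first exact: exprn_ge0.
rewrite !absM !absX absN (abs_principal q1) !expr1n !mulr1.
by rewrite PoszD PoszM; apply: fr.
Qed.

Lemma ferm_integral_exists (f : int -> K) r : 0 <= r -> r < 1 ->
  geom_continuous f r -> complete_abs abs -> exists L, fermionic_integral_is abs p q f L.
Proof.
move=> r0 r1 fr complete; apply: complete => e e0.
have [N0 hN0] := exprn_lt_small r0 r1 e0.
suff near : forall m k, (N0 <= m)%N -> (m <= k)%N ->
    abs (ferm_sum p q f k - ferm_sum p q f m) < e.
  exists N0 => m k m0 k0.
  by case: (leqP m k) => mk; [rewrite absBC; apply: near | apply: near => //; exact: ltnW].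
move=> m k m0 mk; apply: le_lt_trans (ferm_sum_cauchy r0 fr mk) (le_lt_trans _ hN0).
by apply: ler_wiXn2l => //; exact: ltW.
Qed.

End Fermionic.

End PadicAbs.

Theorem mainTheorem4 (R : realType) (K : closedFieldType) (abs : K -> R)
  (p : nat) (hp : prime p) (hodd : odd p)
  (habs : padic_abs abs p) (hcomp : complete_abs abs)
  (q : K) (hq : abs (q - 1) < 1) (alpha h : nat) (hh : (0 < h)%N) (n : nat) :
  exists G : K,
    qGenocchi_is abs p q^-1 alpha h n 2 G /\
    fermionic_integral_is abs p q
      (fun xi => q ^ ((h%:Z - 1) * (xi + 1)) * (qnum (q ^- alpha) (1 - xi)) ^+ n)
      (G / (n.+1)%:R).
Proof.
set r := prate p (abs (q - 1)).
have r0 : 0 <= r := prate_ge0 _ _.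
have r1 : r < 1 := prate_lt1 hp hq.
have qV := abs_principalV hp habs hq.
have qV1 : abs (q^-1 - 1) < 1 by rewrite qV.
set g := qgenocchi_integrand q^-1 alpha h n 2.
have g_cont : geom_continuous abs p g r.
  by apply: geom_continuous_qgenocchi_integrand => //; rewrite qV.
have [L gL] := ferm_integral_exists hp habs hodd qV1 r0 r1 g_cont hcomp.
exists (L * n.+1%:R); rewrite /qGenocchi_is /fermionic_integral_is.
rewrite mulfK ?(natr_neq0 hp habs) //; split=> //.
apply: (converges_to_near habs r0 r1 gL) => N.
rewrite (ferm_sum_reflect _ _ _ (principal_neq0 hp habs hq)).
apply: (abs_ferm_sum_sub hp habs hodd qV1 (exprn_ge0 N r0)) => i _.
rewrite qgenocchi_integrandV -/g.
have -> : -1 - ((p ^ N)%N%:Z - 1 - i%:Z) = i%:Z + (-1) * (p ^ N)%N%:Z by ring.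
exact: g_cont.
Qed.
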